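(* Let $T$ be a bounded operator on a Hilbert space $\mathcal{H}$ with $\|T\|\le1$, let $K$ be a compact operator on $\mathcal{H}$ with dense range, and let $A$ be a bounded operator on $\mathcal{H}$ such that $TK=KA$. If $A^n\to0$ in the weak operator topology as $n\to\infty$, then $T$ is asymptotically stable, i.e. $\|T^nx\|\to0$ as $n\to\infty$ for every $x\in\mathcal{H}$. *)

From HB Require Import structures.
From mathcomp Require Import all_boot all_order all_algebra.
From mathcomp Require Import all_classical all_reals.
From mathcomp Require Import topology normedtype sequences.
From mathcomp Require Import complex.
Set Implicit Arguments. Unset Strict Implicit. Unset Printing Implicit Defensive.
Import Order.TTheory GRing.Theory Num.Theory.
Import numFieldNormedType.Exports.
Local Open Scope ring_scope.
Local Open Scope classical_set_scope.

Section Hilbert.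
Variables (R : realType) (H : lmodType R[i]) (ip : H -> H -> R[i]).

Definition is_inner_product : Prop :=
  [/\ (forall (a : R[i]) (x y z : H), ip (a *: x + y) z = a * ip x z + ip y z),
      (forall x y : H, ip y x = conjc (ip x y)),
      (forall x : H, 0 <= ip x x) &
      (forall x : H, ip x x = 0 -> x = 0)].

Definition hnorm (x : H) : R := Num.sqrt (complex.Re (ip x x)).

Definition hcauchy (u : nat -> H) : Prop :=
  forall e : R, 0 < e -> exists N : nat,
    forall m n : nat, (N <= m)%N -> (N <= n)%N -> hnorm (u m - u n) < e.

Definition hconverges (u : nat -> H) (l : H) : Prop :=
  (fun n => hnorm (u n - l)) @ \oo --> (0 : R).

Definition is_hilbert_space : Prop :=
  is_inner_product /\
  (forall u : nat -> H, hcauchy u -> exists l : H, hconverges u l).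

Definition bounded_op (T : {linear H -> H}) : Prop :=
  exists M : R, forall x : H, hnorm (T x) <= M * hnorm x.

Definition op_norm_le1 (T : {linear H -> H}) : Prop :=
  forall x : H, hnorm (T x) <= hnorm x.

(* compact operator: the image of the closed unit ball is relatively compact,
   i.e. (in the metric space H) every sequence in the image of the unit ball
   has a norm-convergent subsequence. *)
Definition compact_op (K : {linear H -> H}) : Prop :=
  forall u : nat -> H, (forall n, hnorm (u n) <= 1) ->
    exists (phi : nat -> nat) (l : H),
      (forall n, (phi n < phi n.+1)%N) /\ hconverges (fun n => K (u (phi n))) l.

Definition dense_range (K : {linear H -> H}) : Prop :=
  forall (x : H) (e : R), 0 < e -> exists y : H, hnorm (x - K y) < e.

Definition wot_powers_to0 (A : {linear H -> H}) : Prop :=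
  forall x y : H, (fun n => Normc.normc (ip (iter n A x) y)) @ \oo --> (0 : R).

Definition asymptotically_stable (T : {linear H -> H}) : Prop :=
  forall x : H, (fun n => hnorm (iter n T x)) @ \oo --> (0 : R).

End Hilbert.

From mathcomp Require Import all_boot all_order all_algebra.
From mathcomp Require Import all_classical all_reals.
From mathcomp Require Import topology normedtype sequences.
From mathcomp Require Import complex.
From mathcomp Require Import ring lra.
Set Implicit Arguments. Unset Strict Implicit. Unset Printing Implicit Defensive.
Import Order.TTheory GRing.Theory Num.Theory.
Import numFieldNormedType.Exports.
Local Open Scope classical_set_scope.
Local Open Scope complex_scope.
Local Open Scope ring_scope.

(* As ||T|| <= 1, the sequence n |-> ||T^n x|| is nonincreasing
   and x |-> T^n x is 1-Lipschitz; since the range of K is dense it therefore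
   suffices that inf_n ||T^n K y|| = inf_n ||K A^n y|| = 0 for every y.  The
   orbit (A^n y) is weakly null, so by a gliding hump argument (where
   completeness is used) it has a bounded subsequence, along which K A^n y has
   a convergent subsequence by compactness.  Its limit L is 0: taking n vectors
   of the orbit that are almost orthogonal, their sum has norm O(sqrt n) while
   its image under K is close to n L.  No adjoint of K is needed. *)

Lemma cvg0_natP (R : realType) (u : nat -> R) : u @ \oo --> (0 : R) <->
  forall e : R, 0 < e -> exists N, forall n, (N <= n)%N -> `|u n| < e.
Proof.
rewrite cvgrPdist_lt; split => h e e0.
  have [N _ hN] := h e e0; exists N => n Nn.
  by have := hN n Nn; rewrite sub0r normrN.
have [N hN] := h e e0; exists N => // n Nn.
by rewrite sub0r normrN; apply: hN.
Qed.

Section ComplexNorm.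
Variable R : rcfType.
Local Notation normc := (@Normc.normc R).
Local Notation Re := (@complex.Re R).

Lemma normc_ge0 (a : R[i]) : 0 <= normc a.
Proof. by case: a => p q; exact: sqrtr_ge0. Qed.

Lemma normcJ (a : R[i]) : normc a^* = normc a.
Proof. by case: a => p q; rewrite /= sqrrN. Qed.

Lemma normc_real (r : R) : 0 <= r -> normc r%:C = r.
Proof. by move=> r0; rewrite /= expr0n addr0 sqrtr_sqr ger0_norm. Qed.

Lemma Re_le_normc (a : R[i]) : Re a <= normc a.
Proof.
case: a => p q /=; apply: le_trans (ler_norm p) _.
by rewrite -sqrtr_sqr ler_sqrt ?addr_ge0 ?sqr_ge0 // lerDl sqr_ge0.
Qed.

Lemma mulcJ_normc (a : R[i]) : a * a^* = (normc a ^+ 2)%:C.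
Proof.
case: a => p q; rewrite /= sqr_sqrtr ?addr_ge0 ?sqr_ge0 //.
by congr (_ +i* _); ring.
Qed.

End ComplexNorm.

Section InnerProduct.
Variables (R : realType) (H : lmodType R[i]) (ip : H -> H -> R[i]).
Hypothesis hip : is_inner_product ip.
Local Notation hn := (hnorm ip).
Local Notation normc := (@Normc.normc R).
Local Notation Re := (@complex.Re R).

Lemma ipDl x y z : ip (x + y) z = ip x z + ip y z.
Proof. by case: hip => h _ _ _; rewrite -{1}[x]scale1r h mul1r. Qed.

Lemma ip0l z : ip 0 z = 0.
Proof. by apply: (@addrI _ (ip 0 z)); rewrite -ipDl !addr0. Qed.

Lemma ipZl a x z : ip (a *: x) z = a * ip x z.
Proof. by case: hip => h _ _ _; rewrite -[a *: x]addr0 h ip0l addr0. Qed.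

Lemma ipC x y : ip y x = (ip x y)^*.
Proof. by case: hip => _ h _ _; rewrite h. Qed.

Lemma ipDr x y z : ip z (x + y) = ip z x + ip z y.
Proof. by rewrite ipC ipDl rmorphD /= -!ipC. Qed.

Lemma ip0r z : ip z 0 = 0.
Proof. by rewrite ipC ip0l rmorph0. Qed.

Lemma ipZr a x z : ip z (a *: x) = a^* * ip z x.
Proof. by rewrite ipC ipZl rmorphM /= -ipC. Qed.

Lemma ipNl x z : ip (- x) z = - ip x z.
Proof. by rewrite -scaleN1r ipZl mulN1r. Qed.

Lemma ipNr x z : ip z (- x) = - ip z x.
Proof. by rewrite -scaleN1r ipZr rmorphN1 mulN1r. Qed.

Lemma ipBl x y z : ip (x - y) z = ip x z - ip y z.
Proof. by rewrite ipDl ipNl. Qed.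

Lemma ipBr x y z : ip z (x - y) = ip z x - ip z y.
Proof. by rewrite ipDr ipNr. Qed.

Lemma ip_suml I (r : seq I) (P : pred I) (F : I -> H) z :
  ip (\sum_(i <- r | P i) F i) z = \sum_(i <- r | P i) ip (F i) z.
Proof. exact: (big_morph (ip^~ z) (fun x y => ipDl x y z) (ip0l z)). Qed.

Lemma ip_sumr I (r : seq I) (P : pred I) (F : I -> H) z :
  ip z (\sum_(i <- r | P i) F i) = \sum_(i <- r | P i) ip z (F i).
Proof. exact: (big_morph (ip z) (fun x y => ipDr x y z) (ip0r z)). Qed.

Lemma ipxx_real x : ip x x = (Re (ip x x))%:C.
Proof.
case: hip => _ _ ge0 _; move: (ge0 x).
by case: (ip x x) => a b; rewrite lecE /= => /andP[/eqP -> _].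
Qed.

Lemma Re_ipxx_ge0 x : 0 <= Re (ip x x).
Proof. by case: hip => _ _ ge0 _; move: (ge0 x); rewrite lecE => /andP[]. Qed.

Lemma hnorm_ge0 x : 0 <= hn x.
Proof. exact: sqrtr_ge0. Qed.

Lemma hnorm_sqr x : hn x ^+ 2 = Re (ip x x).
Proof. by rewrite sqr_sqrtr // Re_ipxx_ge0. Qed.

Lemma hnorm_eq0 x : hn x = 0 -> x = 0.
Proof.
by move=> hx0; case: hip => _ _ _; apply; rewrite ipxx_real -hnorm_sqr hx0 expr0n.
Qed.

Lemma hnorm0 : hn 0 = 0.
Proof. by rewrite /hnorm ip0l /= sqrtr0. Qed.

Lemma hnormZ a x : hn (a *: x) = normc a * hn x.
Proof.
rewrite /hnorm ipZl ipZr mulrA mulcJ_normc ipxx_real -rmorphM /=.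
by rewrite sqrtrM ?sqr_ge0 // sqrtr_sqr ger0_norm // normc_ge0.
Qed.

Lemma hnormN x : hn (- x) = hn x.
Proof. by rewrite -scaleN1r hnormZ normcN Normc.normc1 mul1r. Qed.

Lemma hdistC x y : hn (x - y) = hn (y - x).
Proof. by rewrite -hnormN opprB. Qed.

Lemma hnormMn x n : hn (x *+ n) = n%:R * hn x.
Proof. by rewrite -scaler_nat hnormZ normcMn Normc.normc1. Qed.

Lemma cauchy_schwarz x y : normc (ip x y) <= hn x * hn y.
Proof.
have [->|yn0] := eqVneq y 0.
  by rewrite ip0r hnorm0 mulr0 /= expr0n addr0 sqrtr0.
set c := ip x y; set b := Re (ip y y).
have hb : ip y y = b%:C by rewrite ipxx_real.
have b_gt0 : 0 < b.
  rewrite lt_def Re_ipxx_ge0 andbT; apply: contra yn0 => /eqP b0.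
  by apply/eqP/hnorm_eq0; rewrite /hnorm -/b b0 sqrtr0.
have bC0 : b%:C != 0 by apply/eqP => -[/eqP]; rewrite gt_eqF.
set t := c / b%:C.
have orth : ip (x - t *: y) y = 0 by rewrite ipBl ipZl hb divfK // subrr.
have pyth : ip (x - t *: y) (x - t *: y) = ip x x - ((normc c ^+ 2 / b)%:C).
  rewrite ipBr ipZr orth mulr0 subr0 ipBl ipZl (ipC x y) -/c; congr (_ - _).
  apply: (mulIf bC0); rewrite /t [c / _ * _]mulrAC mulcJ_normc divfK //.
  by rewrite -rmorphM /= divfK ?gt_eqF.
have := Re_ipxx_ge0 (x - t *: y); rewrite pyth ipxx_real /= subr_ge0.
rewrite ler_pdivrMr // => hc.
rewrite -(@ler_pXn2r _ 2) // ?nnegrE ?normc_ge0 ?mulr_ge0 ?hnorm_ge0 //.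
by rewrite exprMn !hnorm_sqr.
Qed.

Lemma ler_hnormD x y : hn (x + y) <= hn x + hn y.
Proof.
have cross : Re (ip x y) + Re (ip y x) <= (hn x * hn y) *+ 2.
  rewrite mulr2n; apply: lerD; apply: le_trans (Re_le_normc _) _.
    exact: cauchy_schwarz.
  by rewrite mulrC cauchy_schwarz.
rewrite -(@ler_pXn2r _ 2) // ?nnegrE ?addr_ge0 ?hnorm_ge0 //.
by rewrite hnorm_sqr ipDl !ipDr !raddfD /= -!hnorm_sqr sqrrD; lra.
Qed.

Lemma ler_hdistD x y z : hn (x - z) <= hn (x - y) + hn (y - z).
Proof. by have := ler_hnormD (x - y) (y - z); rewrite addrA subrK. Qed.

Lemma ler_hnorm_sum I (r : seq I) (P : pred I) (F : I -> H) :
  hn (\sum_(i <- r | P i) F i) <= \sum_(i <- r | P i) hn (F i).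
Proof.
apply: (big_ind2 (fun x a => hn x <= a)) => //; first by rewrite hnorm0.
by move=> x1 a1 x2 a2 h1 h2; apply: le_trans (ler_hnormD _ _) (lerD h1 h2).
Qed.

Lemma ler_normc_ip_dist x y z :
  normc (ip x z) <= normc (ip y z) + hn (x - y) * hn z.
Proof.
have -> : ip x z = ip y z + ip (x - y) z by rewrite ipBl addrC subrK.
by apply: le_trans (le_normcD _ _) _; rewrite lerD2l cauchy_schwarz.
Qed.

End InnerProduct.

Section WeaklyNull.
Variables (R : realType) (H : lmodType R[i]) (ip : H -> H -> R[i]).
Local Notation normc := (@Normc.normc R).

Definition weakly_null (u : nat -> H) : Prop :=
  forall z : H, (fun n => normc (ip (u n) z)) @ \oo --> (0 : R).

Lemma weakly_null_sub (u : nat -> H) (s : nat -> nat) :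
  (forall n, (n <= s n)%N) -> weakly_null u -> weakly_null (u \o s).
Proof.
move=> s_ge wu z; apply/cvg0_natP => e e0.
have [N hN] := (cvg0_natP _).1 (wu z) e e0.
by exists N => n Nn; apply/hN/(leq_trans Nn).
Qed.

End WeaklyNull.

Section GlidingHump.
Variables (R : realType) (H : lmodType R[i]) (ip : H -> H -> R[i]).
Hypothesis hH : is_hilbert_space ip.
Variable v : nat -> H.
Hypothesis v_large : forall k, 3%:R ^+ k <= hnorm ip (v k).

Let hip : is_inner_product ip := proj1 hH.
Local Notation hn := (hnorm ip).
Local Notation normc := (@Normc.normc R).
Local Notation r k := ((3%:R : R) ^- k).

(* xs k := sum_(j < k) +-d j, where the hump d k has norm r k and its sign
   makes |<xs k.+1, v k>| >= rho k; the later humps have total norm at most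
   sum_(j > k) r j = r k / 2, too little to undo this in the limit. *)
Let rho k := r k * hn (v k).
Let d k := (r k / hn (v k))%:C *: v k.
Let step k x := if rho k <= normc (ip (x + d k) (v k)) then x + d k else x - d k.
Let xs k := iteri k step 0.

Let r_gt0 k : 0 < r k.
Proof. by rewrite invr_gt0 exprn_gt0 ?ltr0n. Qed.

Let v_gt0 k : 0 < hn (v k).
Proof. by apply: lt_le_trans (v_large k); rewrite exprn_gt0 ?ltr0n. Qed.

Lemma rho_ge1 k : 1 <= rho k.
Proof. by rewrite /rho mulrC ler_pdivlMr ?exprn_gt0 ?ltr0n // mul1r. Qed.

Lemma hnorm_hump k : hn (d k) = r k.
Proof.
rewrite (hnormZ hip) normc_real ?divr_ge0 ?ltW //.
by rewrite divfK // gt_eqF.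
Qed.

Lemma ip_hump k : ip (d k) (v k) = (rho k)%:C.
Proof.
rewrite (ipZl hip) (ipxx_real hip) -(hnorm_sqr hip) -rmorphM /=.
by rewrite /rho expr2 mulrA divfK // gt_eqF.
Qed.

Lemma hump_step_ip k : rho k <= normc (ip (xs k.+1) (v k)).
Proof.
rewrite [xs _]/= /step; case: ifP => // /negbT; rewrite -ltNge => hlt.
have e : ip (xs k + d k) (v k) - ip (xs k - d k) (v k) = (rho k *+ 2)%:C.
  by rewrite (ipDl hip) (ipBl hip) ip_hump rmorphMn /= mulr2n; ring.
have := le_normcD (ip (xs k + d k) (v k)) (- ip (xs k - d k) (v k)).
rewrite normcN e normc_real; last by rewrite mulrn_wge0 // mulr_ge0 ?ltW.
by rewrite mulr2n; lra.
Qed.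

Lemma hump_step_dist k : hn (xs k.+1 - xs k) <= r k.
Proof.
rewrite [xs k.+1]/= /step; case: ifP => _; rewrite addrC addKr ?(hnormN hip).
all: by rewrite hnorm_hump.
Qed.

Lemma hump_dist k m : (k <= m)%N -> hn (xs m - xs k) <= 3%:R / 2%:R * r k.
Proof.
have tail i : hn (xs (k + i) - xs k) <= 3%:R / 2%:R * (r k - r (k + i)).
  elim: i => [|i IH]; first by rewrite addn0 subrr (hnorm0 hip) subrr mulr0.
  rewrite addnS; apply: le_trans (ler_hdistD hip _ (xs (k + i)) _) _.
  apply: le_trans (lerD (hump_step_dist _) IH) _.
  rewrite exprSr invfM; have := r_gt0 (k + i); lra.
move=> /subnKC <-; apply: le_trans (tail _) _.
by have := r_gt0 (k + (m - k)); lra.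
Qed.

Lemma hump_cauchy : hcauchy ip xs.
Proof.
move=> e e0; have e3 : 0 < e / 3%:R by rewrite divr_gt0 ?ltr0n.
have r_cvg0 : (fun k => r k) @ \oo --> (0 : R).
  under eq_fun => k do rewrite -exprVn.
  by apply: cvg_expr; rewrite ger0_norm ?invf_lt1 ?ltr1n ?invr_ge0 ?ler0n.
have [k /(_ k (leqnn k))] := (cvg0_natP _).1 r_cvg0 _ e3.
rewrite ger0_norm ?ltW // => hk.
exists k => m n km kn; apply: le_lt_trans (ler_hdistD hip _ (xs k) _) _.
rewrite (hdistC hip (xs k)).
by have := hump_dist km; have := hump_dist kn; lra.
Qed.

Lemma gliding_hump : exists x, forall k, 4%:R^-1 <= normc (ip (v k) x).
Proof.
have [x hx] := proj2 hH _ hump_cauchy.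
exists x => k; have r4 : 0 < r k / 4%:R by rewrite divr_gt0 ?ltr0n.
have [N hN] := (cvg0_natP _).1 hx _ r4.
have m_near : hn (xs (maxn N k.+1) - x) < r k / 4%:R.
  by have := hN _ (leq_maxl N k.+1); rewrite ger0_norm // hnorm_ge0.
have m_far := hump_dist (leq_maxr N k.+1); rewrite exprSr invfM in m_far.
have near : hn (xs k.+1 - x) <= 3%:R / 4%:R * r k.
  apply: le_trans (ler_hdistD hip _ (xs (maxn N k.+1)) _) _.
  by rewrite (hdistC hip (xs k.+1)); lra.
have := ler_normc_ip_dist hip (xs k.+1) x (v k).
rewrite (ipC hip (v k) x) normcJ.
have := ler_wpM2r (ltW (v_gt0 k)) near; have := hump_step_ip k.
by have := rho_ge1 k; rewrite /rho; lra.
Qed.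

End GlidingHump.

Section CompactImage.
Variables (R : realType) (H : lmodType R[i]) (ip : H -> H -> R[i]).
Hypothesis hip : is_inner_product ip.
Local Notation hn := (hnorm ip).
Local Notation normc := (@Normc.normc R).

Lemma weakly_null_eventually_small (w : nat -> H) (eta : R) (zs : seq H) :
  weakly_null ip w -> 0 < eta ->
  exists N, forall k, (N <= k)%N ->
    forall z, z \in zs -> normc (ip (w k) z) < eta.
Proof.
move=> ww eta0; elim: zs => [|z zs [N1 hN1]]; first by exists 0%N.
have [N2 hN2] := (cvg0_natP _).1 (ww z) _ eta0.
exists (maxn N1 N2) => k; rewrite geq_max => /andP[k1 k2] y.
rewrite inE => /orP[/eqP ->|yzs]; last exact: hN1.
by have := hN2 k k2; rewrite ger0_norm // normc_ge0.
Qed.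

(* Each new index is chosen past the point where w is eta-orthogonal to all
   the vectors chosen before it. *)
Lemma almost_orthogonal_subseq (w : nat -> H) (eta : R) (N0 : nat) :
  weakly_null ip w -> 0 < eta ->
  exists s : nat -> nat, (forall j, (N0 <= s j)%N) /\
    (forall i j, (i < j)%N -> normc (ip (w (s j)) (w (s i))) < eta).
Proof.
move=> ww eta0.
have [f hf] := choice (fun zs => weakly_null_eventually_small zs ww eta0).
pose next zs := maxn N0 (f zs).
pose chosen := fix chosen j :=
  if j is j'.+1 then w (next (chosen j')) :: chosen j' else [::].
exists (fun j => next (chosen j)); split => [j|i j ij]; first exact: leq_maxl.
apply: (hf (chosen j)); first exact: leq_maxr.
elim: j ij => [//|j IH]; rewrite ltnS leq_eqVlt => /orP[/eqP ->|ij].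
  by rewrite /= inE eqxx.
by rewrite /= inE IH ?orbT.
Qed.

Lemma hnorm_sum_almost_orthogonal (c : nat -> H) (B eta : R) (n : nat) :
  0 <= eta -> (forall j, hn (c j) <= B) ->
  (forall i j, (i < j)%N -> normc (ip (c j) (c i)) <= eta) ->
  hn (\sum_(j < n) c j) ^+ 2 <= n%:R * (B ^+ 2 + eta *+ n).
Proof.
move=> eta0 cB corth.
have -> : n%:R * (B ^+ 2 + eta *+ n) = \sum_(i < n) (B ^+ 2 + eta *+ n).
  by rewrite sumr_const card_ord mulr_natl.
rewrite (hnorm_sqr hip) (ip_suml hip) raddf_sum; apply: ler_sum => i _.
rewrite (ip_sumr hip) raddf_sum /= (bigD1 i) //=.
apply: lerD; first by rewrite -(hnorm_sqr hip) !expr2 ler_pM ?hnorm_ge0 ?cB.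
have -> : eta *+ n = \sum_(j < n) eta by rewrite sumr_const card_ord.
rewrite [X in _ <= X](bigD1 i) //= ler_wpDl //.
apply: ler_sum => j ji; apply: le_trans (Re_le_normc _) _.
have [ij|ji'] := ltnP i j; first by rewrite (ipC hip) normcJ corth.
by apply: corth; rewrite ltn_neqAle ji' andbT.
Qed.

Lemma ler_hnorm_sum_const (y : nat -> H) (L : H) (n : nat) :
  n%:R * hn L <= hn (\sum_(j < n) y j) + \sum_(j < n) hn (y j - L).
Proof.
have -> : n%:R * hn L = hn (\sum_(j < n) y j - \sum_(j < n) (y j - L)).
  by rewrite sumrB opprB addrC subrK sumr_const card_ord (hnormMn hip).
apply: le_trans (ler_hnormD hip _ _) _; rewrite (hnormN hip) lerD2l.
exact: ler_hnorm_sum.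
Qed.

(* S is the sum of n vectors w_j that are pairwise n^-1-orthogonal and have
   K w_j eps-close to L. *)
Lemma weakly_null_sum_estimate (K : {linear H -> H}) (w : nat -> H) (B : R)
    (L : H) (n : nat) (eps : R) :
  (0 < n)%N -> 0 < eps -> (forall k, hn (w k) <= B) -> weakly_null ip w ->
  hconverges ip (fun k => K (w k)) L ->
  exists S, hn S ^+ 2 <= n%:R * (B ^+ 2 + 1) /\ n%:R * (hn L - eps) <= hn (K S).
Proof.
move=> n_gt0 eps_gt0 wB ww KwL.
have eta_gt0 : 0 < n%:R^-1 :> R by rewrite invr_gt0 ltr0n.
have [N0 hN0] := (cvg0_natP _).1 KwL _ eps_gt0.
have [s [s_ge s_orth]] := almost_orthogonal_subseq N0 ww eta_gt0.
exists (\sum_(j < n) w (s j)); split.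
  have := @hnorm_sum_almost_orthogonal (w \o s) B n%:R^-1 n (ltW eta_gt0).
  rewrite -[n%:R^-1 *+ n]mulr_natl mulfV ?pnatr_eq0 -?lt0n //.
  by apply=> [j | i j ij]; [exact: wB | exact/ltW/s_orth].
have := ler_hnorm_sum_const (fun j => K (w (s j))) L n; rewrite -linear_sum.
have : \sum_(j < n) hn (K (w (s j)) - L) <= n%:R * eps.
  have -> : n%:R * eps = \sum_(j < n) eps.
    by rewrite sumr_const card_ord mulr_natl.
  apply: ler_sum => j _.
  by apply/ltW; have := hN0 _ (s_ge j); rewrite ger0_norm ?hnorm_ge0.
by rewrite mulrBr; lra.
Qed.

(* Otherwise the estimate with eps = ||L|| / 2 gives n ||L|| / 2 <= ||K S||
   <= ||K|| ||S|| = O(sqrt n). *)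
Lemma bounded_op_weakly_null_limit_eq0 (K : {linear H -> H}) (w : nat -> H)
    (B : R) (L : H) :
  bounded_op ip K -> (forall n, hn (w n) <= B) -> weakly_null ip w ->
  hconverges ip (fun n => K (w n)) L -> L = 0.
Proof.
move=> [M hM] wB ww KwL; apply: (hnorm_eq0 hip); apply/eqP.
rewrite eq_le hnorm_ge0 andbT leNgt; apply/negP => l_gt0; set l := hn L in l_gt0.
pose m := `|M|; pose q := B ^+ 2 + 1.
have m_ge0 : 0 <= m := normr_ge0 M.
have q_ge0 : 0 <= q by rewrite addr_ge0 ?sqr_ge0.
have [n n_gt0 n_large] :
    exists2 n : nat, (0 < n)%N & 4%:R * m ^+ 2 * q < n%:R * l ^+ 2.
  have X_ge0 : 0 <= 4%:R * m ^+ 2 * q / l ^+ 2.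
    by rewrite divr_ge0 ?sqr_ge0 // mulr_ge0 // mulr_ge0 ?sqr_ge0 ?ler0n.
  exists (Num.bound (4%:R * m ^+ 2 * q / l ^+ 2)).+1 => //.
  rewrite -ltr_pdivrMr ?exprn_gt0 //; apply: lt_trans (archi_boundP X_ge0) _.
  by rewrite ltr_nat.
have l2_gt0 : 0 < l / 2%:R by rewrite divr_gt0 ?ltr0n.
have [S [S_small KS_large]] := weakly_null_sum_estimate n_gt0 l2_gt0 wB ww KwL.
have KS_le : hn (K S) <= m * hn S.
  by apply: le_trans (hM S) _; rewrite ler_wpM2r ?hnorm_ge0 ?ler_norm.
have nl_ge0 : 0 <= n%:R * l / 2%:R by rewrite divr_ge0 ?mulr_ge0 ?ler0n ?ltW.
have : (n%:R * l / 2%:R) ^+ 2 <= (m * hn S) ^+ 2.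
  rewrite ler_pXn2r // ?nnegrE ?mulr_ge0 ?hnorm_ge0 //.
  by move: KS_large; rewrite -/l; lra.
have n_gt0' : 0 < n%:R :> R by rewrite ltr0n.
have := ler_wpM2l (sqr_ge0 m) S_small.
by move: n_large n_gt0'; rewrite -/q !exprMn; nra.
Qed.

Lemma hconvergesZ (a : R[i]) (u : nat -> H) (l : H) :
  hconverges ip u l -> hconverges ip (fun n => a *: u n) (a *: l).
Proof.
move=> ul; rewrite /hconverges.
under eq_fun => n do rewrite -scalerBr (hnormZ hip).
by rewrite -(mulr0 (normc a)); apply: cvgM (cvg_cst _) ul.
Qed.

Lemma compact_op_bounded (K : {linear H -> H}) (u : nat -> H) (B : R) :
  compact_op ip K -> (forall n, hn (u n) <= B) ->
  exists (phi : nat -> nat) (l : H),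
    (forall n, (phi n < phi n.+1)%N) /\ hconverges ip (fun n => K (u (phi n))) l.
Proof.
move=> Kc uB; have B1_gt0 : 0 < B + 1.
  by rewrite ltr_wpDl // (le_trans (hnorm_ge0 ip (u 0)) (uB 0)).
have [n|phi [l [phi_incr Kul]]] := Kc (fun n => ((B + 1)^-1)%:C *: u n).
  rewrite (hnormZ hip) normc_real ?invr_ge0 ?(ltW B1_gt0) //.
  rewrite mulrC ler_pdivrMr // mul1r.
  by apply: le_trans (uB n) _; rewrite lerDl.
exists phi, ((B + 1)%:C *: l); split => //.
have := hconvergesZ (B + 1)%:C Kul; congr hconverges; apply: funext => n.
by rewrite linearZ scalerA -rmorphM /= mulfV ?gt_eqF // scale1r.
Qed.

End CompactImage.

Section CompactOpOnWeaklyNull.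
Variables (R : realType) (H : lmodType R[i]) (ip : H -> H -> R[i]).
Hypothesis hH : is_hilbert_space ip.
Let hip : is_inner_product ip := proj1 hH.
Local Notation hn := (hnorm ip).

(* Otherwise ||u_n|| grows past 3^k along a subsequence, and the gliding hump
   produces a vector against which u is not weakly null. *)
Lemma weakly_null_frequently_bounded (u : nat -> H) : weakly_null ip u ->
  exists (B : R) (s : nat -> nat),
    (forall n, (n <= s n)%N) /\ (forall n, hn (u (s n)) <= B).
Proof.
move=> wu.
have [[k hk]|unbounded] :=
  pselect (exists k, forall n, (k <= n)%N -> hn (u n) <= 3%:R ^+ k).
  exists (3%:R ^+ k), (maxn k).
  by split=> n; [exact: leq_maxr | exact/hk/leq_maxl].
have large k : exists n, (k <= n)%N /\ 3%:R ^+ k <= hn (u n).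
  apply: contrapT => nolarge; apply: unbounded; exists k => n kn.
  rewrite leNgt; apply/negP => lt; apply: nolarge.
  by exists n; split => //; exact: ltW.
have [s hs] := choice large.
have [x hx] := gliding_hump hH (fun k => (hs k).2).
have quarter_gt0 : 0 < 4%:R^-1 :> R by rewrite invr_gt0 ltr0n.
have [N /(_ (s N) (hs N).1)] := (cvg0_natP _).1 (wu x) _ quarter_gt0.
by rewrite ger0_norm ?normc_ge0 // ltNge hx.
Qed.

Lemma compact_op_weakly_null_frequently_small (K : {linear H -> H})
    (u : nat -> H) :
  bounded_op ip K -> compact_op ip K -> weakly_null ip u ->
  forall e : R, 0 < e -> exists n, hn (K (u n)) < e.
Proof.
move=> Kb Kc wu e e_gt0.
have [B [s [s_ge uB]]] := weakly_null_frequently_bounded wu.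
have [phi [l [phi_incr Kul]]] := compact_op_bounded hip Kc uB.
have phi_ge n : (n <= phi n)%N.
  by elim: n => // n IH; exact: leq_ltn_trans IH (phi_incr n).
have l0 : l = 0.
  apply: (bounded_op_weakly_null_limit_eq0 hip Kb (fun n => uB (phi n)) _ Kul).
  exact: (weakly_null_sub (u := u \o s) phi_ge (weakly_null_sub s_ge wu)).
rewrite l0 in Kul; have [N /(_ N (leqnn N))] := (cvg0_natP _).1 Kul _ e_gt0.
by rewrite subr0 ger0_norm ?hnorm_ge0 // => small; exists (s (phi N)).
Qed.

End CompactOpOnWeaklyNull.

Section Contraction.
Variables (R : realType) (H : lmodType R[i]) (ip : H -> H -> R[i]).
Hypothesis hip : is_inner_product ip.
Variable T : {linear H -> H}.
Hypothesis T_le1 : op_norm_le1 ip T.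
Local Notation hn := (hnorm ip).

Lemma iterB n x y : iter n T (x - y) = iter n T x - iter n T y.
Proof. by elim: n => //= n ->; rewrite linearB. Qed.

Lemma hnorm_iter_le n x : hn (iter n T x) <= hn x.
Proof. by elim: n => //= n IH; apply: le_trans (T_le1 _) IH. Qed.

Lemma hnorm_iter_nonincr m n x : (m <= n)%N -> hn (iter n T x) <= hn (iter m T x).
Proof. by move=> /subnK <-; rewrite iterD; apply: hnorm_iter_le. Qed.

Lemma hnorm_iter_approx m n x y :
  (m <= n)%N -> hn (iter n T x) <= hn (x - y) + hn (iter m T y).
Proof.
move=> mn; have -> : iter n T x = iter n T (x - y) + iter n T y.
  by rewrite iterB subrK.
apply: le_trans (ler_hnormD hip _ _) _.
by rewrite lerD ?hnorm_iter_le ?hnorm_iter_nonincr.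
Qed.

End Contraction.

Theorem lemma3p2 (R : realType) (H : lmodType R[i]) (ip : H -> H -> R[i])
  (hH : is_hilbert_space ip)
  (T K A : {linear H -> H})
  (hT : bounded_op ip T) (hT1 : op_norm_le1 ip T)
  (hK : bounded_op ip K) (hKc : compact_op ip K) (hKd : dense_range ip K)
  (hA : bounded_op ip A)
  (hTK : forall x : H, T (K x) = K (A x))
  (hAw : wot_powers_to0 ip A) :
  asymptotically_stable ip T.
Proof.
have iterTK n y : iter n T (K y) = K (iter n A y).
  by elim: n => //= n ->; exact: hTK.
move=> x; apply/cvg0_natP => e e_gt0.
have e2_gt0 : 0 < e / 2%:R by rewrite divr_gt0 ?ltr0n.
have [y Ky_near] := hKd x _ e2_gt0.
have [m KAy_small] :=
  compact_op_weakly_null_frequently_small hH hK hKc (hAw y) e2_gt0.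
exists m => n mn; rewrite ger0_norm ?hnorm_ge0 //.
apply: le_lt_trans (hnorm_iter_approx (proj1 hH) hT1 x (K y) mn) _.
by rewrite iterTK; lra.
Qed.
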